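(* Let $L=L(m,n;k,l)$ be an $L$-shaped supergrid graph with two distinct vertices $s$ and $t$. If $L$ has a Hamiltonian $(s,t)$-path, then none of the following holds: (F1) $s$ or $t$ is a cut vertex of $L$, or $\{s,t\}$ is a vertex cut of $L$; (F4) there is a vertex $w$ of $L$ with $\deg(w)=1$, $w\ne s$, $w\ne t$; (F5) $m-k=1$, $n-l=2$, $l=1$, $k\ge 2$, and $\{s,t\}=\{(1,2),(2,3)\}$ or $\{s,t\}=\{(1,3),(2,2)\}$.
   Context: The infinite supergrid graph has as vertices all points $(x,y)\in\mathbb{Z}^2$, two distinct vertices $u,v$ being adjacent iff $|u_x-v_x|\le 1$ and $|u_y-v_y|\le 1$. For integers $m,n>1$ and $k,l\ge 1$ with $m-k\ge 1$, $n-l\ge 1$, $L(m,n;k,l)$ is the subgraph induced by $\{(x,y):1\le x\le m,\ 1\le y\le n\}\setminus\{(x,y): m-k+1\le x\le m,\ 1\le y\le l\}$ ($(1,1)$ is the upper-left corner, $y$ increases downward). A vertex set $V_1$ is a vertex cut of a connected graph $G$ if $G-V_1$ is disconnected; $v$ is a cut vertex if $\{v\}$ is a vertex cut. A Hamiltonian $(s,t)$-path is a simple path from $s$ to $t$ visiting every vertex exactly once. *)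

From Stdlib Require Import ZArith List Lia.
Import ListNotations.
Open Scope Z_scope.

Definition vertex := (Z * Z)%type.

Definition sg_adj (u v : vertex) : Prop :=
  u <> v /\ Z.abs (fst u - fst v) <= 1 /\ Z.abs (snd u - snd v) <= 1.

Definition inL (m n k l : Z) (v : vertex) : Prop :=
  (1 <= fst v <= m /\ 1 <= snd v <= n) /\
  ~ (m - k + 1 <= fst v <= m /\ 1 <= snd v <= l).

Definition L_params (m n k l : Z) : Prop :=
  m > 1 /\ n > 1 /\ k >= 1 /\ l >= 1 /\ m - k >= 1 /\ n - l >= 1.

Fixpoint is_walk (p : list vertex) : Prop :=
  match p with
  | [] => True
  | [_] => True
  | u :: ((v :: _) as q) => sg_adj u v /\ is_walk q
  end.

Definition ham_path (V : vertex -> Prop) (s t : vertex) (p : list vertex) : Prop :=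
  NoDup p /\ is_walk p /\ (forall v, In v p <-> V v) /\
  head p = Some s /\ last p s = t /\ p <> [].

Definition connected_in (V : vertex -> Prop) (u v : vertex) : Prop :=
  exists p : list vertex, is_walk p /\ (forall w, In w p -> V w) /\
    head p = Some u /\ last p u = v /\ p <> [].

Definition disconnected (V : vertex -> Prop) : Prop :=
  exists u v, V u /\ V v /\ ~ connected_in V u v.

Definition vertex_cut (V : vertex -> Prop) (C : vertex -> Prop) : Prop :=
  (forall w, C w -> V w) /\ disconnected (fun w => V w /\ ~ C w).

Definition cut_vertex (V : vertex -> Prop) (x : vertex) : Prop :=
  vertex_cut V (fun w => w = x).

Definition degree_one (V : vertex -> Prop) (w : vertex) : Prop :=
  exists u, V u /\ sg_adj w u /\ forall u', V u' -> sg_adj w u' -> u' = u.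

(* A Hamiltonian path lists the vertices of L in a linear order f 0, ..., f (N-1)
   with consecutive entries adjacent.  Deleting s = f 0, t = f (N-1), or both,
   leaves an interval of that order, which is still a walk through every
   remaining vertex, so no such deletion disconnects L.  A vertex other than s
   and t sits strictly inside the order and therefore has two distinct
   neighbours, so its degree is at least 2.  In case F5, L = L(k+1,3;k,1) and
   the corner (1,1) is adjacent only to (1,2) and (2,2), while (1,3) is adjacent
   only to (1,2), (2,2) and (2,3); both are interior to the path, and following
   their forced neighbours shows that the path consists of just five vertices,
   which misses the vertex (3,2) (present since k >= 2). *)
From Stdlib Require Import ZArith List Lia.
Import ListNotations.
Open Scope Z_scope.

Lemma sg_adj_sym u v : sg_adj u v -> sg_adj v u.
Proof.
  unfold sg_adj; intros [Hne [Hx Hy]].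
  rewrite <- (Z.abs_opp (fst v - fst u)), <- (Z.abs_opp (snd v - snd u)).
  repeat split; [congruence | lia | lia].
Qed.

Lemma last_default_irrel {A : Type} (p : list A) d d' : p <> [] -> last p d = last p d'.
Proof.
  induction p as [|a [|b q] IHp]; intros Hne; [congruence | reflexivity |].
  apply IHp; discriminate.
Qed.

Lemma last_nth {A : Type} (p : list A) d d' : p <> [] -> last p d = nth (length p - 1) p d'.
Proof.
  induction p as [|a [|b q] IHp]; intros Hne; [congruence | reflexivity |].
  change (last (b :: q) d = nth (length (b :: q)) (a :: b :: q) d').
  rewrite IHp by discriminate; simpl; rewrite Nat.sub_0_r; reflexivity.
Qed.

Lemma walk_nth (p : list vertex) d : is_walk p ->
  forall i, (S i < length p)%nat -> sg_adj (nth i p d) (nth (S i) p d).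
Proof.
  induction p as [|a [|b q] IHp]; intros Hw i Hi; simpl in Hi; [lia | lia |].
  destruct Hw as [Hab Hw], i as [|i]; [exact Hab |].
  apply (IHp Hw); simpl; lia.
Qed.

Lemma connected_in_refl (W : vertex -> Prop) u : W u -> connected_in W u u.
Proof.
  intros Hu; exists [u]; repeat split; [| discriminate].
  intros w [<- | []]; exact Hu.
Qed.

Lemma connected_in_cons (W : vertex -> Prop) u v w :
  W u -> sg_adj u v -> connected_in W v w -> connected_in W u w.
Proof.
  intros Hu Huv [[|x q] [Hwalk [Hin [Hhead [Hlast _]]]]]; [discriminate Hhead |].
  injection Hhead as ->.
  exists (u :: v :: q); split; [split; assumption |].
  split; [intros y [<- | Hy]; [exact Hu | apply Hin, Hy] |].
  split; [reflexivity |].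
  split; [| discriminate].
  rewrite <- Hlast; change (last (v :: q) u = last (v :: q) v).
  apply last_default_irrel; discriminate.
Qed.

Lemma chain_connected (W : vertex -> Prop) (g : nat -> vertex) lo hi :
  (forall k, (lo <= k < hi)%nat -> sg_adj (g k) (g (S k))) ->
  (forall k, (lo <= k <= hi)%nat -> W (g k)) ->
  forall i j, (lo <= i <= hi)%nat -> (lo <= j <= hi)%nat -> connected_in W (g i) (g j).
Proof.
  intros Hstep HW i j Hi Hj.
  destruct (Nat.le_ge_cases i j) as [Hij | Hji].
  - assert (Hup : forall d, (d <= j - lo)%nat -> connected_in W (g (j - d)%nat) (g j)).
    { induction d as [|d IHd]; intros Hd.
      - rewrite Nat.sub_0_r; apply connected_in_refl, HW; lia.
      - apply connected_in_cons with (g (j - d)%nat); [apply HW; lia | | apply IHd; lia].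
        replace (j - d)%nat with (S (j - S d)) by lia; apply Hstep; lia. }
    replace i with (j - (j - i))%nat by lia; apply Hup; lia.
  - assert (Hdown : forall d, (d <= hi - j)%nat -> connected_in W (g (j + d)%nat) (g j)).
    { induction d as [|d IHd]; intros Hd.
      - rewrite Nat.add_0_r; apply connected_in_refl, HW; lia.
      - apply connected_in_cons with (g (j + d)%nat); [apply HW; lia | | apply IHd; lia].
        rewrite Nat.add_succ_r; apply sg_adj_sym, Hstep; lia. }
    replace i with (j + (i - j))%nat by lia; apply Hdown; lia.
Qed.

Record ham_enum (V : vertex -> Prop) (f : nat -> vertex) (N : nat) (s t : vertex) : Prop := {
  he_nonempty : (0 < N)%nat;
  he_first : f 0%nat = s;
  he_last : f (N - 1)%nat = t;
  he_step : forall i, (S i < N)%nat -> sg_adj (f i) (f (S i));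
  he_inj : forall i j, (i < N)%nat -> (j < N)%nat -> f i = f j -> i = j;
  he_onto : forall v, V v -> exists i, (i < N)%nat /\ f i = v;
  he_mem : forall i, (i < N)%nat -> V (f i)
}.

Arguments he_nonempty {V f N s t}.
Arguments he_first {V f N s t}.
Arguments he_last {V f N s t}.
Arguments he_step {V f N s t}.
Arguments he_inj {V f N s t}.
Arguments he_onto {V f N s t}.
Arguments he_mem {V f N s t}.

Lemma ham_path_enum {V s t p} :
  ham_path V s t p -> ham_enum V (fun i => nth i p (0,0)) (length p) s t.
Proof.
  intros [Hnd [Hwalk [Hin [Hhead [Hlast Hne]]]]].
  split.
  - destruct p; [congruence | simpl; lia].
  - destruct p; simpl in *; congruence.
  - rewrite <- Hlast; symmetry; apply last_nth; exact Hne.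
  - apply walk_nth, Hwalk.
  - intros i j Hi Hj; apply (NoDup_nth p (0,0)); assumption.
  - intros v Hv; apply In_nth, Hin, Hv.
  - intros i Hi; apply Hin, nth_In, Hi.
Qed.

Lemma ham_enum_rev {V f N s t} :
  ham_enum V f N s t -> ham_enum V (fun i => f (N - 1 - i)%nat) N t s.
Proof.
  intros He; split.
  - exact (he_nonempty He).
  - rewrite Nat.sub_0_r; exact (he_last He).
  - pose proof (he_nonempty He); rewrite Nat.sub_diag; exact (he_first He).
  - intros i Hi; apply sg_adj_sym.
    replace (N - 1 - i)%nat with (S (N - 1 - S i)) by lia; apply (he_step He); lia.
  - intros i j Hi Hj E; apply (he_inj He) in E; lia.
  - intros v Hv; destruct (he_onto He v Hv) as [i [Hi <-]].
    exists (N - 1 - i)%nat; split; [lia | f_equal; lia].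
  - intros i Hi; apply (he_mem He); lia.
Qed.

Section HamEnum.
Context {V : vertex -> Prop} {f : nat -> vertex} {N : nat} {s t : vertex}.
Hypothesis He : ham_enum V f N s t.

Lemma ham_enum_interval_not_disconnected (C : vertex -> Prop) lo hi :
  (hi < N)%nat ->
  (forall i, (i < N)%nat -> ~ C (f i) <-> (lo <= i <= hi)%nat) ->
  ~ disconnected (fun w => V w /\ ~ C w).
Proof.
  intros Hhi HC [u [v [[Hu Cu] [[Hv Cv] Hnc]]]]; apply Hnc.
  destruct (he_onto He u Hu) as [i [Hi <-]], (he_onto He v Hv) as [j [Hj <-]].
  apply (chain_connected _ f lo hi).
  - intros k Hk; apply (he_step He); lia.
  - intros k Hk; split; [apply (he_mem He); lia | apply HC; lia].
  - apply HC; assumption.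
  - apply HC; assumption.
Qed.

Lemma ham_enum_first_not_cut : ~ cut_vertex V s.
Proof.
  intros [_ Hdis]; revert Hdis.
  pose proof (he_nonempty He).
  apply ham_enum_interval_not_disconnected with 1%nat (N - 1)%nat; [lia |].
  intros i Hi; rewrite <- (he_first He); split.
  - intros Hne; destruct i; [congruence | lia].
  - intros Hrange E; apply (he_inj He) in E; lia.
Qed.

Lemma ham_enum_ends_not_cut : s <> t -> ~ vertex_cut V (fun w => w = s \/ w = t).
Proof.
  intros Hst [_ Hdis]; revert Hdis.
  assert (HN : (1 < N)%nat).
  { destruct (Nat.eq_dec N 1) as [E |]; [| pose proof (he_nonempty He); lia].
    destruct Hst; rewrite <- (he_first He), <- (he_last He), E; reflexivity. }
  apply ham_enum_interval_not_disconnected with 1%nat (N - 2)%nat; [lia |].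
  intros i Hi; rewrite <- (he_first He), <- (he_last He); split.
  - intros Hne; destruct (Nat.eq_dec i 0), (Nat.eq_dec i (N - 1)); subst; try lia;
      destruct Hne; auto.
  - intros Hrange [E | E]; apply (he_inj He) in E; lia.
Qed.

Lemma ham_enum_interior w : V w -> w <> s -> w <> t ->
  exists i, (S (S i) < N)%nat /\ f (S i) = w /\ sg_adj w (f i) /\ sg_adj w (f (S (S i))).
Proof.
  intros Hw Hws Hwt.
  destruct (he_onto He w Hw) as [[|i] [Hi Fi]]; [rewrite (he_first He) in Fi; congruence |].
  assert (S i <> N - 1)%nat by (intros E; rewrite E, (he_last He) in Fi; congruence).
  exists i; split; [lia |]; split; [exact Fi |]; rewrite <- Fi; split.
  - apply sg_adj_sym, (he_step He); lia.
  - apply (he_step He); lia.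
Qed.

Lemma ham_enum_not_degree_one w : V w -> w <> s -> w <> t -> ~ degree_one V w.
Proof.
  intros Hw Hws Hwt [u [_ [_ Huniq]]].
  destruct (ham_enum_interior w Hw Hws Hwt) as [i [Hi [_ [Hpred Hsucc]]]].
  assert (E : f i = f (S (S i))).
  { rewrite (Huniq _ (he_mem He i ltac:(lia)) Hpred).
    exact (eq_sym (Huniq _ (he_mem He _ Hi) Hsucc)). }
  apply (he_inj He) in E; lia.
Qed.

End HamEnum.

Section ThinColumn.
Variable k : Z.
Hypothesis Hk : k >= 2.
Let V := inL (k + 1) 3 k 1.

Lemma neighbours_11 v : V v -> sg_adj (1,1) v -> v = (1,2) \/ v = (2,2).
Proof.
  destruct v as [a b]; unfold V, inL, sg_adj; cbn [fst snd].
  intros [[Hx Hy] Hcut] [Hne [Ha Hb]].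
  assert (~ (a = 1 /\ b = 1)) by (intros [-> ->]; apply Hne; reflexivity).
  assert ((a = 1 \/ a = 2) /\ b = 2) as [[-> | ->] ->] by lia; auto.
Qed.

Lemma neighbours_13 v : V v -> sg_adj (1,3) v -> v = (1,2) \/ v = (2,2) \/ v = (2,3).
Proof.
  destruct v as [a b]; unfold V, inL, sg_adj; cbn [fst snd].
  intros [[Hx Hy] Hcut] [Hne [Ha Hb]].
  assert (~ (a = 1 /\ b = 3)) by (intros [-> ->]; apply Hne; reflexivity).
  assert (a = 1 /\ b = 2 \/ a = 2 /\ b = 2 \/ a = 2 /\ b = 3)
    as [[-> ->] | [[-> ->] | [-> ->]]] by lia; auto.
Qed.

Lemma neighbours_12 v : V v -> sg_adj (1,2) v ->
  v = (1,1) \/ v = (1,3) \/ v = (2,2) \/ v = (2,3).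
Proof.
  destruct v as [a b]; unfold V, inL, sg_adj; cbn [fst snd].
  intros [[Hx Hy] Hcut] [Hne [Ha Hb]].
  assert (~ (a = 1 /\ b = 2)) by (intros [-> ->]; apply Hne; reflexivity).
  assert (a = 1 /\ b = 1 \/ a = 1 /\ b = 3 \/ a = 2 /\ b = 2 \/ a = 2 /\ b = 3)
    as [[-> ->] | [[-> ->] | [[-> ->] | [-> ->]]]] by lia; auto.
Qed.

Lemma V_11 : V (1,1). Proof. unfold V, inL; simpl; lia. Qed.
Lemma V_13 : V (1,3). Proof. unfold V, inL; simpl; lia. Qed.
Lemma V_32 : V (3,2). Proof. unfold V, inL; simpl; lia. Qed.

Ltac same_index He i j := assert ((i = j)%nat) by (apply (he_inj He); [lia | lia | congruence]).

Lemma no_ham_enum_12_23 f N : ~ ham_enum V f N (1,2) (2,3).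
Proof.
  intros He; pose proof (he_first He) as F0; pose proof (he_last He) as Ft.
  destruct (ham_enum_interior He (1,1)) as [i [Hi [F11 [Hp Hs]]]];
    [exact V_11 | discriminate | discriminate |].
  destruct (neighbours_11 _ (he_mem He _ Hi) Hs) as [Fs | Fs];
    [same_index He (S (S i)) 0%nat; lia |].
  destruct (neighbours_11 _ (he_mem He i ltac:(lia)) Hp) as [Fp | Fp];
    [| same_index He i (S (S i)); lia].
  same_index He i 0%nat; subst i.
  (* The end (1,2) is already followed by (1,1), so (1,3) lies between (2,2) and t. *)
  destruct (ham_enum_interior He (1,3)) as [j [Hj [F13 [Hp' Hs']]]];
    [exact V_13 | discriminate | discriminate |].
  destruct (neighbours_13 _ (he_mem He j ltac:(lia)) Hp') as [Fp' | [Fp' | Fp']].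
  - same_index He j 0%nat; subst j; congruence.
  - same_index He j 2%nat; subst j.
    destruct (neighbours_13 _ (he_mem He _ Hj) Hs') as [Fs' | [Fs' | Fs']];
      [same_index He 4%nat 0%nat; lia | same_index He 4%nat 2%nat; lia |].
    same_index He 4%nat (N - 1)%nat.
    destruct (he_onto He (3,2) V_32) as [q [Hq Fq]].
    do 5 (destruct q as [|q]; [congruence |]); lia.
  - same_index He j (N - 1)%nat; lia.
Qed.

Lemma no_ham_enum_22_13 f N : ~ ham_enum V f N (2,2) (1,3).
Proof.
  intros He; pose proof (he_first He) as F0; pose proof (he_last He) as Ft.
  destruct (ham_enum_interior He (1,1)) as [i [Hi [F11 [Hp Hs]]]];
    [exact V_11 | discriminate | discriminate |].
  destruct (neighbours_11 _ (he_mem He _ Hi) Hs) as [Fs | Fs];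
    [| same_index He (S (S i)) 0%nat; lia].
  destruct (neighbours_11 _ (he_mem He i ltac:(lia)) Hp) as [Fp | Fp];
    [same_index He i (S (S i)); lia |].
  same_index He i 0%nat; subst i.
  assert (H3 : (3 < N)%nat).
  { destruct (Nat.eq_dec N 3) as [-> |]; [simpl in Ft; congruence | lia]. }
  pose proof (he_step He 2 H3) as Hs3; rewrite Fs in Hs3.
  destruct (neighbours_12 _ (he_mem He 3 H3) Hs3) as [F3 | [F3 | [F3 | F3]]].
  - same_index He 3%nat 1%nat; lia.
  - same_index He 3%nat (N - 1)%nat.
    destruct (he_onto He (3,2) V_32) as [q [Hq Fq]].
    do 4 (destruct q as [|q]; [congruence |]); lia.
  - same_index He 3%nat 0%nat; lia.
  - pose proof (he_step He (N - 2) ltac:(lia)) as Hpt.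
    replace (S (N - 2)) with (N - 1)%nat in Hpt by lia; rewrite Ft in Hpt.
    destruct (neighbours_13 _ (he_mem He (N - 2) ltac:(lia)) (sg_adj_sym _ _ Hpt))
      as [Fq | [Fq | Fq]].
    + same_index He (N - 2)%nat 2%nat.
      assert (N = 4)%nat as -> by lia; simpl in Ft; congruence.
    + same_index He (N - 2)%nat 0%nat; lia.
    + same_index He (N - 2)%nat 3%nat.
      assert (N = 5)%nat as -> by lia; simpl in Ft.
      destruct (he_onto He (3,2) V_32) as [q [Hq Fq']].
      do 5 (destruct q as [|q]; [congruence |]); lia.
Qed.

End ThinColumn.

Theorem lemma7 (m n k l : Z) (s t : vertex) :
  L_params m n k l ->
  inL m n k l s -> inL m n k l t -> s <> t ->
  (exists p, ham_path (inL m n k l) s t p) ->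
  ~ ( (* F1 *)
      (cut_vertex (inL m n k l) s \/ cut_vertex (inL m n k l) t \/
       vertex_cut (inL m n k l) (fun w => w = s \/ w = t))
    \/ (* F4 *)
      (exists w, inL m n k l w /\ degree_one (inL m n k l) w /\ w <> s /\ w <> t)
    \/ (* F5 *)
      (m - k = 1 /\ n - l = 2 /\ l = 1 /\ k >= 2 /\
       ((s = (1,2) /\ t = (2,3)) \/ (s = (2,3) /\ t = (1,2)) \/
        (s = (1,3) /\ t = (2,2)) \/ (s = (2,2) /\ t = (1,3))))).
Proof.
  intros _ _ _ Hst [p Hp] HF.
  pose proof (ham_path_enum Hp) as He.
  destruct HF as [[Hs | [Ht | Hends]] | [[w [Hw [Hdeg [Hws Hwt]]]] | F5]].
  - exact (ham_enum_first_not_cut He Hs).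
  - exact (ham_enum_first_not_cut (ham_enum_rev He) Ht).
  - exact (ham_enum_ends_not_cut He Hst Hends).
  - exact (ham_enum_not_degree_one He w Hw Hws Hwt Hdeg).
  - destruct F5 as [Hmk [Hnl [-> [Hk Hst_cases]]]].
    assert (n = 3) as -> by lia; assert (m = k + 1) as -> by lia.
    destruct Hst_cases as [[-> ->] | [[-> ->] | [[-> ->] | [-> ->]]]].
    + exact (no_ham_enum_12_23 k Hk _ _ He).
    + exact (no_ham_enum_12_23 k Hk _ _ (ham_enum_rev He)).
    + exact (no_ham_enum_22_13 k Hk _ _ (ham_enum_rev He)).
    + exact (no_ham_enum_22_13 k Hk _ _ He).
Qed.
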